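(* Fix $n\in\mathbb{N}$. For integers $0\le s\le t\le n$ let $\mathcal{M}(n,s,t)$ denote the number of monochromatic Schur triples on $\{1,\dots,n\}$ under the coloring $R^sB^{t-s}R^{n-t}$. Then the minimum of $\mathcal{M}(n,s,t)$ over all such integers $s,t$ is attained at \[ s_0=\Bigl\lfloor\frac{4n+2}{11}\Bigr\rfloor,\qquad t_0=\Bigl\lfloor\frac{10n}{11}\Bigr\rfloor . \]
   Context: A Schur triple on $[n]=\{1,\dots,n\}$ is an ordered triple $(x,y,z)\in[n]^3$ with $z=x+y$ (ordered, so $(x,y,x+y)$ and $(y,x,x+y)$ are distinct if $x\ne y$); it is monochromatic under a coloring $\chi$ if $\chi(x)=\chi(y)=\chi(z)$. The coloring $R^sB^{t-s}R^{n-t}$ colors $1,\dots,s$ red, $s+1,\dots,t$ blue, and $t+1,\dots,n$ red. *)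

From mathcomp Require Import all_boot.
Set Implicit Arguments. Unset Strict Implicit. Unset Printing Implicit Defensive.

(* Coloring R^s B^(t-s) R^(n-t) of [n]: x is red iff x <= s or t < x
   (true = red, false = blue). *)
Definition red (s t x : nat) : bool := (x <= s) || (t < x).

Definition schurM (n s t : nat) : nat :=
  \sum_(1 <= x < n.+1) \sum_(1 <= y < n.+1)
     ((x + y <= n) && (red s t x == red s t y) && (red s t y == red s t (x + y))).

(* Counting lattice points in triangles expresses the number M(n, s, t) of
   monochromatic Schur triples through binomials C(k, 2) of differences of n, s
   and t.  With Q(a, b, c) = a(a-1) + b(b-1) + 2c(c-1), this closed form gives
   2M(n, s, t) >= Q(a, b, c) for some integers with 2a + b + c = n, with equality
   for (a, b, c) = (s, t - 2s, n - t) when 2s <= n <= s + t + 1.  On the plane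
   2a + b + c = n the increments of Q along the lattice directions are a positive
   definite binary form plus a small linear term, so Q is minimised at
   (s0, t0 - 2s0, n - t0), which lies in that range. *)

From Stdlib Require Import ZArith Lia.
From mathcomp Require Import all_boot zify.

Definition grid_sum (n : nat) (f : nat -> nat -> nat) : nat :=
  \sum_(1 <= x < n.+1) \sum_(1 <= y < n.+1) f x y.

Lemma grid_sumD n f g :
  grid_sum n (fun x y => f x y + g x y) = grid_sum n f + grid_sum n g.
Proof. by rewrite /grid_sum -big_split; apply: eq_bigr => x _; rewrite big_split. Qed.

Lemma eq_grid_sum n f g :
  (forall x y, 0 < x <= n -> 0 < y <= n -> f x y = g x y) -> grid_sum n f = grid_sum n g.
Proof.
move=> efg; apply: eq_big_nat => x /andP[x_gt0 x_le]; apply: eq_big_nat => y /andP[y_gt0 y_le].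
by apply: efg; lia.
Qed.

Definition in_triangle (p q m x y : nat) : bool := [&& p < x, q < y & x + y <= m].

Lemma sum_interval_indicator n q k :
  \sum_(1 <= y < n.+1) ((q < y) && (y <= k)) = minn k n - q.
Proof.
elim: n => [|n IHn]; first by rewrite big_geq.
by rewrite big_nat_recr //= IHn; case: (leqP k n) => ?; case: (ltnP q n.+1) => ? /=; lia.
Qed.

Lemma sum_subn_gt n p k :
  \sum_(1 <= x < n.+1) (p < x) * (k - x) + 'C(k - maxn n p, 2) = 'C(k - p, 2).
Proof.
elim: n => [|n IHn]; first by rewrite big_geq // max0n.
rewrite big_nat_recr //= -IHn -addnA; congr (_ + _).
case: (ltnP p n.+1) => hp; last by rewrite mul0n add0n; congr 'C(_, 2); lia.
rewrite mul1n (_ : maxn n p = n); last by lia.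
by rewrite subnS; case: (k - n) => // j; rewrite binS bin1 addnC.
Qed.

Lemma grid_sum_triangle n p q m : m <= n ->
  grid_sum n (in_triangle p q m) = 'C(m - p - q, 2).
Proof.
move=> hm.
rewrite /grid_sum (eq_bigr (fun x => (p < x) * (m - q - x))); last first.
  move=> x _; rewrite -[_ - _ - x]subnAC -(minn_idPl (leq_trans (leq_subr x m) hm)).
  rewrite -sum_interval_indicator big_distrr /=; apply: eq_bigr => y _.
  rewrite /in_triangle; case: (p < x); case: (ltnP q y) => //= hy.
  by rewrite mul1n leq_psubRL // (leq_ltn_trans _ hy).
have := sum_subn_gt n p (m - q).
rewrite (bin_small (n := _ - _)); last by lia.
by rewrite addn0 subnAC.
Qed.

Definition mono_triple (n s t x y : nat) : bool :=
  (x + y <= n) && (red s t x == red s t y) && (red s t y == red s t (x + y)).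

(* Blue triples fill the triangle x, y > s, x + y <= t; red triples are sorted by
   which of x, y exceed t, and those with x, y <= s by whether x + y <= s or t < x + y. *)
Lemma mono_triple_incl_excl n s t x y : s <= t -> t <= n -> 0 < x -> 0 < y ->
  mono_triple n s t x y + in_triangle s 0 n x y + in_triangle 0 s n x y
    + in_triangle 0 0 t x y + in_triangle t s n x y + in_triangle s t n x y
  = in_triangle 0 0 s x y + in_triangle 0 0 n x y + in_triangle s s n x y
    + in_triangle s 0 t x y + in_triangle 0 s t x y + in_triangle t 0 n x y
    + in_triangle 0 t n x y + in_triangle t t n x y.
Proof.
move=> hst htn hx hy; rewrite /mono_triple /in_triangle /red hx hy.
case: (leqP x s) => ?; case: (leqP x t) => ?; case: (leqP y s) => ?; case: (leqP y t) => ?;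
case: (leqP (x + y) s) => ?; case: (leqP (x + y) t) => ?; case: (leqP (x + y) n) => ? //=; lia.
Qed.

Lemma schurM_binomial n s t : s <= t -> t <= n ->
  schurM n s t + 2 * 'C(n - s, 2) + 'C(t, 2) + 2 * 'C(n - t - s, 2)
  = 'C(s, 2) + 'C(n, 2) + 'C(n - 2 * s, 2) + 2 * 'C(t - s, 2) + 2 * 'C(n - t, 2)
    + 'C(n - 2 * t, 2).
Proof.
move=> hst htn; have hsn := leq_trans hst htn.
have := @eq_grid_sum n _ _ (fun x y hx hy =>
  mono_triple_incl_excl n s t x y hst htn (proj1 (andP hx)) (proj1 (andP hy))).
rewrite !grid_sumD !grid_sum_triangle // !subn0 [n - s - t]subnAC -!subnDA !addnn -!mul2n.
by rewrite -[schurM n s t]/(grid_sum n (mono_triple n s t)); lia.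
Qed.

Open Scope Z_scope.

Definition pairs (x : Z) : Z := x * (x - 1).
Definition schurQ (a b c : Z) : Z := pairs a + pairs b + 2 * pairs c.

Lemma quadratic_form_ge0 (u v i j : Z) :
  -5 <= u <= 5 -> -3 <= v <= 3 -> -4 <= u + v <= 4 ->
  0 <= 5 * i * i - 4 * i * j + 3 * j * j + u * i + v * j.
Proof.
move=> hu hv huv.
have [hj|hj] : -1 <= j <= 1 \/ 2 <= Z.abs j by lia.
- have [hi|hi] : -1 <= i <= 1 \/ 2 <= Z.abs i by lia.
  + (have [->|[->|->]] : i = -1 \/ i = 0 \/ i = 1 by lia);
    (have [->|[->|->]] : j = -1 \/ j = 0 \/ j = 1 by lia); lia.
  + have ? : 2 * Z.abs i <= i * i by nia.
    have ? : Z.abs ((u - 4 * j) * i) <= 9 * Z.abs i by nia.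
    have ? : 0 <= 3 * j * j + v * j.
      by (have [->|[->|->]] : j = -1 \/ j = 0 \/ j = 1 by lia); lia.
    nia.
- have sq : 20 * (5 * i * i - 4 * i * j + 3 * j * j + u * i + v * j)
    = (10 * i - 4 * j + u) ^ 2 + 44 * (j * j) + (8 * (u + v) + 12 * v) * j - u * u by ring.
  have ? : 0 <= (10 * i - 4 * j + u) ^ 2 by nia.
  have ? : u * u <= 25 by nia.
  have ? : 2 * Z.abs j <= j * j by nia.
  have ? : Z.abs ((8 * (u + v) + 12 * v) * j) <= 68 * Z.abs j by nia.
  lia.
Qed.

(* Along the plane, schurQ (a0 + i, b0 - 2i + j, c0 - j) - schurQ a0 b0 c0 is the
   form above with u = 2a0 - 4b0 + 1 and v = 2b0 - 4c0 + 1. *)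
Lemma schurQ_min (a0 b0 c0 a b c : Z) :
  -5 <= 2 * a0 - 4 * b0 + 1 <= 5 -> -3 <= 2 * b0 - 4 * c0 + 1 <= 3 ->
  -4 <= 2 * a0 - 2 * b0 - 4 * c0 + 2 <= 4 ->
  2 * a + b + c = 2 * a0 + b0 + c0 -> schurQ a0 b0 c0 <= schurQ a b c.
Proof.
move=> hu hv huv hsum.
have := @quadratic_form_ge0 _ _ (a - a0) (c0 - c) hu hv ltac:(lia).
have -> : b = b0 - 2 * (a - a0) + (c0 - c) by lia.
rewrite /schurQ /pairs; lia.
Qed.

Definition schurF (n s t : Z) : Z :=
  pairs s + pairs n + pairs (Z.max 0 (n - 2 * s)) + 2 * pairs (t - s) + 2 * pairs (n - t)
  + pairs (Z.max 0 (n - 2 * t)) - 2 * pairs (n - s) - pairs t - 2 * pairs (Z.max 0 (n - t - s)).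

Lemma pairs_max0_le1 x : x <= 1 -> pairs (Z.max 0 x) = 0.
Proof. by move=> hx; have [->|->] : Z.max 0 x = 0 \/ Z.max 0 x = 1 by lia. Qed.

Lemma schurF_middle (n s t : Z) : s <= t -> 2 * s <= n -> n <= s + t + 1 ->
  schurF n s t = schurQ s (t - 2 * s) (n - t).
Proof.
move=> hst hs ht.
rewrite /schurF (Z.max_r 0 (n - 2 * s)) ?pairs_max0_le1; try lia.
rewrite /schurQ /pairs; ring.
Qed.

Lemma schurF_ge_schurQ (n s t : Z) : 0 <= s <= t -> t <= n ->
  exists a b c, 2 * a + b + c = n /\ schurQ a b c <= schurF n s t.
Proof.
move=> hst htn.
have [hs|hs] := Z.lt_ge_cases n (2 * s).
  exists (t - s), (2 * s - t), (n - t); split; first lia.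
  rewrite /schurF !pairs_max0_le1; try lia.
  rewrite /schurQ /pairs; nia.
have [ht|ht] := Z.le_gt_cases n (s + t + 1).
  by exists s, (t - 2 * s), (n - t); rewrite schurF_middle //; lia.
rewrite /schurF (Z.max_r 0 (n - 2 * s)) ?(Z.max_r 0 (n - t - s)); try lia.
have [ht'|ht'] := Z.lt_ge_cases n (2 * t).
  exists (n - t), (2 * t - s - n), s; split; first lia.
  rewrite pairs_max0_le1; try lia.
  rewrite /schurQ /pairs; nia.
exists (t - s), (n - 2 * t + 2 * s), 0; split; first lia.
rewrite (Z.max_r 0 (n - 2 * t)); try lia.
rewrite /schurQ /pairs; nia.
Qed.

Lemma pairs_bin2 (k : nat) : pairs (Z.of_nat k) = 2 * Z.of_nat 'C(k, 2).
Proof.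
elim: k => [|k IHk] //; rewrite binS bin1.
by move: IHk; rewrite /pairs; lia.
Qed.

Lemma schurM_closed_form n s t : (s <= t)%N -> (t <= n)%N ->
  2 * Z.of_nat (schurM n s t) = schurF (Z.of_nat n) (Z.of_nat s) (Z.of_nat t).
Proof.
move=> hst htn; move/(f_equal Z.of_nat): (schurM_binomial n s t hst htn); rewrite /schurF.
have -> : Z.max 0 (Z.of_nat n - 2 * Z.of_nat s) = Z.of_nat (n - 2 * s) by lia.
have -> : Z.max 0 (Z.of_nat n - 2 * Z.of_nat t) = Z.of_nat (n - 2 * t) by lia.
have -> : Z.max 0 (Z.of_nat n - Z.of_nat t - Z.of_nat s) = Z.of_nat (n - t - s) by lia.
have -> : Z.of_nat t - Z.of_nat s = Z.of_nat (t - s) by lia.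
have -> : Z.of_nat n - Z.of_nat t = Z.of_nat (n - t) by lia.
have -> : Z.of_nat n - Z.of_nat s = Z.of_nat (n - s) by lia.
rewrite !pairs_bin2; lia.
Qed.

Close Scope Z_scope.

Theorem lemma2p2 (n : nat) :
  let s0 := (4 * n + 2) %/ 11 in
  let t0 := (10 * n) %/ 11 in
  [/\ s0 <= t0, t0 <= n &
      forall s t : nat, s <= t -> t <= n -> schurM n s0 t0 <= schurM n s t].
Proof.
move=> s0 t0.
have s0_le_t0 : s0 <= t0 by rewrite /s0 /t0; lia.
have t0_le_n : t0 <= n by rewrite /t0; lia.
split=> // s t hst htn.
have [a [b [c [abc Q_le]]]] :=
  @schurF_ge_schurQ (Z.of_nat n) (Z.of_nat s) (Z.of_nat t) ltac:(lia) ltac:(lia).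
suff : (2 * Z.of_nat (schurM n s0 t0) <= 2 * Z.of_nat (schurM n s t))%Z by lia.
rewrite !schurM_closed_form // schurF_middle; try (rewrite /s0 /t0; lia).
apply: Z.le_trans Q_le; apply: schurQ_min; rewrite /s0 /t0; lia.
Qed.
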